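(* For all $n\ge 4$, $|F_n(321,1423,3124)|=F_n+2$, where $F_n$ is the $n$-th Fibonacci number with $F_0=F_1=1$ and $F_n=F_{n-1}+F_{n-2}$ for $n\ge 2$.
   Context: A permutation $\pi$ avoids a classical pattern $p\in S_k$ if no subsequence of $\pi$ of length $k$ is order-isomorphic to $p$. A Fishburn permutation is a permutation $\pi=\pi_1\cdots\pi_n$ of $[n]$ for which there are no indices $i<j$ with $\pi_j<\pi_i<\pi_{i+1}$ and $\pi_i=\pi_j+1$. $F_n(\sigma_1,\dots,\sigma_k)$ denotes the set of Fishburn permutations of length $n$ avoiding each of the classical patterns $\sigma_1,\dots,\sigma_k$. *)

From mathcomp Require Import all_boot all_order all_fingroup.
Set Implicit Arguments. Unset Strict Implicit. Unset Printing Implicit Defensive.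

(* Permutations of [n] are represented as s : 'S_n, i.e. bijections of
   'I_n = {0,..,n-1}; position i (0-based) carries value s i (0-based),
   i.e. pi_{i+1} = s i + 1.  Shifting by 1 preserves all order relations. *)

(* A classical pattern p of length k is given as a sequence of its entries
   (1-based, e.g. [:: 3; 2; 1]).  s contains p iff there is a strictly
   increasing choice of k positions whose values are order-isomorphic to p. *)
Definition contains_pattern n (s : 'S_n) (p : seq nat) : bool :=
  [exists f : {ffun 'I_(size p) -> 'I_n},
     [forall a : 'I_(size p), forall b : 'I_(size p),
        ((a < b)%N ==> (f a < f b)%N) &&
        ((s (f a) < s (f b))%N == (nth 0 p a < nth 0 p b)%N)]].

Definition avoids n (s : 'S_n) (p : seq nat) : bool := ~~ contains_pattern s p.

Definition fishburn n (s : 'S_n) : bool :=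
  ~~ [exists i : 'I_n, exists j : 'I_n,
       [&& (i < j)%N, (i.+1 < n)%N,
           (s j < s i)%N,
           (s i < nth 0 [seq val (s k) | k <- enum 'I_n] i.+1)%N &
           (val (s i) == (s j).+1)]].

Definition Fish_avoid n (pats : seq (seq nat)) : {set 'S_n} :=
  [set s : 'S_n | fishburn s && all (avoids s) pats].

Fixpoint fib (n : nat) : nat :=
  match n with
  | 0 => 1
  | 1 => 1
  | (m.+1 as k).+1 => fib k + fib m
  end.

From mathcomp Require Import all_boot all_order all_fingroup.
From mathcomp Require Import zify.
Set Implicit Arguments. Unset Strict Implicit. Unset Printing Implicit Defensive.

(* A permutation of [0, n) is handled through its value function
   p : nat -> nat (p t = value at position t, values 0-based).

   Let p avoid 321, 1423, 3124 and be Fishburn, n >= 4.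
   - If p 0 <= 1, scan p from the left: whenever [0, i) is mapped onto itself
     and is "layered" (every value within distance one of its position), the
     block extends by a fixed point or by an adjacent transposition
     ([prefix_extend], [prefix_bound]); so p is a product of disjoint
     adjacent transpositions ([layered_of_small_head]).
   - If p 0 >= 2, then p 1 = 0 and p 0 is 2 or n - 1, and the remaining
     entries are forced to increase ([increasing_onto]); this gives exactly
     n, 1, 2, ..., n-1 and 3, 1, 4, 5, ..., n, 2 (in 1-based notation).
   Conversely all these permutations qualify.  Layered permutations of
   length n are listed by [layered_seqs n], a list of size fib n, so the
   one-line notations of F_n(321, 1423, 3124) are exactly a duplicate-free
   list of size fib n + 2 ([candidates]); [card_by_encoding] concludes. *)

Definition fishburn_violation n (p : nat -> nat) :=
  exists i j, [/\ i < j, j < n, p i = (p j).+1 & p i < p i.+1].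
Definition occ321 n (p : nat -> nat) :=
  exists i j k, [/\ i < j, j < k, k < n, p k < p j & p j < p i].
Definition occ1423 n (p : nat -> nat) := exists i j k l,
  [/\ i < j, j < k, k < l, l < n & [/\ p i < p k, p k < p l & p l < p j]].
Definition occ3124 n (p : nat -> nat) := exists i j k l,
  [/\ i < j, j < k, k < l, l < n & [/\ p j < p k, p k < p i & p i < p l]].

Record avoiding n (p : nat -> nat) : Prop := Avoiding {
  av_fish : ~ fishburn_violation n p;
  av_321 : ~ occ321 n p;
  av_1423 : ~ occ1423 n p;
  av_3124 : ~ occ3124 n p }.

Record good n (p : nat -> nat) : Prop := Good {
  good_inj : forall i j, i < n -> j < n -> p i = p j -> i = j;
  good_range : forall i, i < n -> p i < n;
  good_surj : forall v, v < n -> exists2 i, i < n & p i = v;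
  good_avoid : avoiding n p }.

(* Every value is within distance one of its position; for a permutation
   this means a product of disjoint adjacent transpositions. *)
Definition layered n (p : nat -> nat) := forall t, t < n -> p t <= t.+1 /\ t <= (p t).+1.

Definition prefix_layered n (p : nat -> nat) i :=
  (forall t, t < n -> (t < i) = (p t < i)) /\ (forall t, t < i -> p t <= t.+1 /\ t <= (p t).+1).

Definition rotated n t := if t == 0 then n.-1 else t.-1.
Definition shifted n t :=
  if t == 0 then 2 else if t == 1 then 0 else if t == n.-1 then 1 else t.+1.

Lemma increasing_gap (p : nat -> nat) a b :
  (forall i j, a <= i -> i < j -> j < b -> p i < p j) ->
  forall i d, a <= i -> i + d < b -> p i + d <= p (i + d).
Proof.
move=> incr i; elim=> [|d IH] Hai Hb; first by rewrite !addn0.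
rewrite addnS in Hb *.
have := incr (i + d) (i + d).+1 ltac:(lia) (ltnSn _) Hb.
have := IH Hai (ltnW Hb); lia.
Qed.

Lemma increasing_onto (p : nat -> nat) a b c :
  (forall i j, a <= i -> i < j -> j < b -> p i < p j) ->
  (forall t, a <= t < b -> c <= p t < c + (b - a)) ->
  forall t, a <= t < b -> p t = c + (t - a).
Proof.
move=> incr rng t Ht.
have lo := increasing_gap incr (i := a) (d := t - a).
have hi := increasing_gap incr (i := t) (d := b.-1 - t).
have := rng a ltac:(lia); have := rng b.-1 ltac:(lia); have := rng t Ht.
rewrite subnKC in lo; last lia.
have E : t + (b.-1 - t) = b.-1 by lia.
rewrite E in hi; have := lo (leqnn a) ltac:(lia); have := hi ltac:(lia) ltac:(lia).
lia.
Qed.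

Section Classification.
Variables (n : nat) (p : nat -> nat).
Hypothesis G : good n p.

Let inj := good_inj G.
Let rng := good_range G.
Let srj := good_surj G.

(* Positions carrying different values differ; together with [inj] this
   lets [lia] relate equalities of positions and of values. *)
Let pos_neq i j : p i <> p j -> i <> j.
Proof. by move=> H E; apply: H; rewrite E. Qed.
Arguments pos_neq : clear implicits.

Lemma prefix_extend i : i < n -> prefix_layered n p i -> p i <= i.+1 ->
  prefix_layered n p i.+1 \/ (i.+2 <= n /\ prefix_layered n p i.+2).
Proof.
move=> Hin [closed lay] Hpi.
have Hge : i <= p i by have := closed i Hin; lia.
have [Hc|Hc] : p i = i \/ p i = i.+1 by lia.
  left; split=> t Ht; have := pos_neq t i.
    by have := inj Ht Hin; have := closed t Ht; lia.
  by have := lay t; lia.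
have Hi1 : i.+1 < n by have := rng Hin; lia.
have Hd := closed i.+1 Hi1.
have [Hdi|Hdi] : p i.+1 = i \/ i.+1 < p i.+1 by have := inj Hi1 Hin; lia.
  right; split; first lia.
  split=> t Ht; have := pos_neq t i; have := pos_neq t i.+1.
    by have := inj Ht Hin; have := inj Ht Hi1; have := closed t Ht; lia.
  by have := lay t; lia.
case: (av_fish (good_avoid G)).
have [j Hj Hpj] := srj Hin; have := closed j Hj; have := pos_neq j i.
by exists i, j; (repeat split); lia.
Qed.

(* Inside the scan p i <= i + 1: otherwise the values i, i + 1 lie to the
   right of i and form a 1423 (with position 0) or a 321 (with position i). *)
Lemma prefix_bound i : 0 < i -> i < n -> prefix_layered n p i -> p i <= i.+1.
Proof.
move=> Hi0 Hin [closed _]; rewrite leqNgt; apply/negP => Hc.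
have [a Ha Hpa] := srj Hin.
have [b Hb Hpb] : exists2 b, b < n & p b = i.+1 by apply: srj; have := rng Hin; lia.
have := closed a Ha; have := closed b Hb; have := closed 0 (ltn_trans Hi0 Hin).
have := pos_neq a i; have := pos_neq b i; have := pos_neq a b.
case: (ltngtP a b) => [Hab|Hab|Hab] *; last lia.
- by apply: (av_1423 (good_avoid G)); exists 0, i, a, b; (repeat split); lia.
- by apply: (av_321 (good_avoid G)); exists i, b, a; (repeat split); lia.
Qed.

Lemma layered_of_small_head : p 0 <= 1 -> layered n p.
Proof.
move=> Hp0.
suff /(_ n (leqnn n)) [i Hi [_ lay]] :
    forall k, k <= n -> exists2 i, k <= i <= n & prefix_layered n p i.
  by have -> : n = i by lia.
elim=> [_|k IH Hk]; first by exists 0 => //; split => // t Ht; lia.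
have [i Hi HQ] := IH (ltnW Hk).
have [Hki|Eik] : k < i \/ i = k by lia.
  by exists i => //; lia.
rewrite {}Eik in HQ Hi.
have Hbound : p k <= k.+1 by case: (posnP k) => [->|Hk0]; [lia|exact: prefix_bound].
by case: (prefix_extend Hk HQ Hbound) => [H|[Hle H]]; [exists k.+1|exists k.+2] => //; lia.
Qed.

(* When p 0 >= 2 the smallest value comes second: otherwise the value 0
   completes a 321, or the value p 0 - 1 gives a Fishburn violation. *)
Lemma second_is_zero : 1 < n -> 2 <= p 0 -> p 1 = 0.
Proof.
move=> Hn Hc; have Hn0 : 0 < n by lia.
have [fsh a321 _ _] := good_avoid G.
have := inj Hn Hn0; case: (ltngtP (p 1) (p 0)) => [Hlt|Hgt|] Hne; last by lia.
- have [q Hq Hpq] := srj Hn0; have := pos_neq q 0; have := pos_neq q 1.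
  case: (posnP (p 1)) => // Hd.
  case: q Hq Hpq => [|[|q]] Hq Hpq *; [lia|lia|].
  by case: a321; exists 0, 1, q.+2; (repeat split); lia.
- have [j Hj Hpj] : exists2 j, j < n & p j = (p 0).-1 by apply: srj; have := rng Hn0; lia.
  by have ? := pos_neq j 0; case: fsh; exists 0, j; (repeat split); lia.
Qed.

(* When p 0 >= 2 it equals 2 or n - 1: an intermediate head value forces a
   321, a 3124 or a 1423 among the positions of the values 1, 2 and n - 1. *)
Lemma head_cases : 1 < n -> 2 <= p 0 -> p 0 = 2 \/ p 0 = n.-1.
Proof.
move=> Hn Hc; have H1 := second_is_zero Hn Hc.
have [_ a321 a1423 a3124] := good_avoid G.
have Hp0 := rng (ltnW Hn).
case: (ltngtP (p 0) 2) => [|Hc3|]; [lia| |by left].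
case: (ltngtP (p 0) n.-1) => [Hcn||]; [|lia|by right].
have [a Ha Hpa] : exists2 a, a < n & p a = n.-1 by apply: srj; lia.
have [b1 Hb1 Hpb1] : exists2 b, b < n & p b = 1 by apply: srj; lia.
have [b2 Hb2 Hpb2] : exists2 b, b < n & p b = 2 by apply: srj; lia.
have late x : p x <> 0 -> p x <> p 0 -> 1 < x by case: x => [|[|x]] //; rewrite H1.
have := late a; have := late b1; have := late b2.
have := pos_neq a b1; have := pos_neq b1 b2.
case: (ltngtP b1 b2) => [Hb12|Hb12|] *; last lia.
- case: (ltngtP a b1) => [Hab|Hab|] *; last lia.
  + by case: a1423; exists 1, a, b1, b2; (repeat split); lia.
  + by case: a3124; exists 0, 1, b1, a; (repeat split); lia.
- by case: a321; exists 0, b2, b1; (repeat split); lia.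
Qed.

(* Head n - 1: the tail has no descent (it would make a 321 with the head),
   so p is the rotation n-1, 0, 1, ..., n-2. *)
Lemma rotated_shape : 0 < n -> p 0 = n.-1 -> forall t, t < n -> p t = rotated n t.
Proof.
move=> Hn0 Hc t Ht; rewrite /rotated; case: eqP => [->//|Ht0].
have -> : t.-1 = 0 + (t - 1) by lia.
apply: (increasing_onto (a := 1) (b := n)); last lia.
- move=> i j Hi Hij Hj; rewrite ltnNge; apply/negP => Hle.
  have Hi' := ltn_trans Hij Hj.
  have := rng Hi'; have := inj Hi' Hn0; have := inj Hi' Hj.
  by move=> *; apply: (av_321 (good_avoid G)); exists 0, i, j; (repeat split); lia.
- by move=> u /andP [Hu1 Hu]; have := rng Hu; have := inj Hu Hn0; lia.
Qed.

(* Head 2: the value 1 must come last (else a 3124 with the last entry), and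
   the middle has no descent (else a 321 with the final 1); so p is
   2, 0, 3, 4, ..., n-1, 1. *)
Lemma shifted_shape : 3 < n -> p 0 = 2 -> forall t, t < n -> p t = shifted n t.
Proof.
move=> Hn Hc; have Hn0 : 0 < n by lia.
have Hn1 : 1 < n by lia.
have Hl : n.-1 < n by lia.
have H1 := second_is_zero Hn1 (eq_leq (esym Hc)).
have [_ a321 _ a3124] := good_avoid G.
have Hlast : p n.-1 = 1.
  have [r Hr Hpr] : exists2 r, r < n & p r = 1 by apply: srj; lia.
  have := pos_neq r 0; have := pos_neq r 1; have := pos_neq n.-1 r.
  have := inj Hl Hr; have := inj Hl Hn0; have := inj Hl Hn1.
  have := rng Hl; case: (ltngtP r n.-1) => [Hrn|Hrn|] *; [|lia|lia].
  by case: a3124; exists 0, 1, r, n.-1; (repeat split); lia.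
move=> t Ht; rewrite /shifted; case: eqP => [->//|Ht0]; case: eqP => [->//|Ht1].
case: eqP => [->//|Htn].
have -> : t.+1 = 3 + (t - 2) by lia.
apply: (increasing_onto (a := 2) (b := n.-1)); last lia.
- move=> i j Hi Hij Hj; rewrite ltnNge; apply/negP => Hle.
  have Hj' : j < n by lia.
  have := rng Hj'; have := inj Hj' Hn0; have := inj Hj' Hn1; have := inj Hj' Hl.
  have := inj (ltn_trans Hij Hj') Hj'.
  by move=> *; apply: a321; exists i, j, n.-1; (repeat split); lia.
- move=> u /andP [Hu2 Hu]; have Hu' : u < n by lia.
  by have := rng Hu'; have := inj Hu' Hn0; have := inj Hu' Hn1; have := inj Hu' Hl; lia.
Qed.

Lemma classification : 3 < n ->
  [\/ layered n p, forall t, t < n -> p t = rotated n t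
    | forall t, t < n -> p t = shifted n t].
Proof.
move=> Hn; case: (leqP (p 0) 1) => Hp0; first by constructor 1; exact: layered_of_small_head.
case: (head_cases (ltnW (ltnW Hn)) Hp0) => Hc.
  by constructor 3; exact: shifted_shape.
by constructor 2; apply: rotated_shape => //; lia.
Qed.
End Classification.

Lemma avoiding_ext n (p q : nat -> nat) :
  (forall t, t < n -> p t = q t) -> avoiding n q -> avoiding n p.
Proof.
move=> E [fsh a321 a1423 a3124]; split.
- case=> i [j [Hij Hj Hv Hasc]]; apply: fsh; exists i, j.
  by rewrite -!E //; lia.
- case=> i [j [k [Hij Hjk Hk Hkj Hji]]]; apply: a321; exists i, j, k.
  by rewrite -!E //; lia.
- case=> i [j [k [l [Hij Hjk Hkl Hl [H1 H2 H3]]]]]; apply: a1423; exists i, j, k, l.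
  by rewrite -!E //; try lia; split.
- case=> i [j [k [l [Hij Hjk Hkl Hl [H1 H2 H3]]]]]; apply: a3124; exists i, j, k, l.
  by rewrite -!E //; try lia; split.
Qed.

Lemma layered_inversion n p i k : layered n p -> i < k -> k < n -> p k < p i -> k = i.+1.
Proof. by move=> L Hik Hk Hp; have := L i (ltn_trans Hik Hk); have := L k Hk; lia. Qed.

(* Layered permutations, having only adjacent inversions, avoid everything. *)
Lemma layered_avoiding n p : layered n p -> avoiding n p.
Proof.
move=> L; split.
- case=> i [j [Hij Hj Hv Hasc]].
  by have Ej := layered_inversion L Hij Hj ltac:(lia); subst j; lia.
- case=> i [j [k [Hij Hjk Hk Hkj Hji]]].
  by have := layered_inversion L (ltn_trans Hij Hjk) Hk ltac:(lia); lia.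
- case=> i [j [k [l [Hij Hjk Hkl Hl [H1 H2 H3]]]]].
  have := layered_inversion L Hjk (ltn_trans Hkl Hl) ltac:(lia).
  by have := layered_inversion L (ltn_trans Hjk Hkl) Hl ltac:(lia); lia.
- case=> i [j [k [l [Hij Hjk Hkl Hl [H1 H2 H3]]]]].
  have := layered_inversion L Hij ltac:(lia) ltac:(lia).
  by have := layered_inversion L (ltn_trans Hij Hjk) ltac:(lia) ltac:(lia); lia.
Qed.

Lemma rotated_inversion n i k : i < k -> rotated n k < rotated n i -> i = 0.
Proof. by rewrite /rotated; case: eqP; case: eqP; lia. Qed.

Lemma rotated_avoiding n : 3 < n -> avoiding n (rotated n).
Proof.
move=> Hn; split.
- case=> i [j [Hij Hj Hv Hasc]].
  have Ei := rotated_inversion (n := n) Hij ltac:(lia); move: Hasc Hv; rewrite Ei /rotated /=.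
  by case: eqP; lia.
- case=> i [j [k [Hij Hjk Hk Hkj Hji]]].
  by have := rotated_inversion Hjk Hkj; lia.
- case=> i [j [k [l [Hij Hjk Hkl Hl [H1 H2 H3]]]]].
  by have := rotated_inversion (ltn_trans Hjk Hkl) H3; lia.
- case=> i [j [k [l [Hij Hjk Hkl Hl [H1 H2 H3]]]]].
  have Ei := rotated_inversion (n := n) Hij ltac:(lia); move: H3; rewrite Ei /rotated /=.
  by case: eqP; lia.
Qed.

Lemma shifted_inversion n i k : 3 < n -> i < k -> k < n ->
  shifted n k < shifted n i -> k = 1 \/ k = n.-1.
Proof. by rewrite /shifted; repeat case: eqP => ?; lia. Qed.

Lemma shifted_avoiding n : 3 < n -> avoiding n (shifted n).
Proof.
move=> Hn; split.
- case=> i [j [Hij Hj Hv Hasc]].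
  have := shifted_inversion Hn Hij Hj ltac:(lia).
  by move: Hv Hasc; rewrite /shifted; repeat case: eqP => ?; lia.
- case=> i [j [k [Hij Hjk Hk Hkj Hji]]].
  have := shifted_inversion Hn Hjk Hk Hkj.
  have := shifted_inversion Hn Hij (ltn_trans Hjk Hk) Hji.
  by move: Hkj Hji; rewrite /shifted; repeat case: eqP => ?; lia.
- case=> i [j [k [l [Hij Hjk Hkl Hl [H1 H2 H3]]]]].
  have := shifted_inversion Hn (ltn_trans Hjk Hkl) Hl H3.
  by have := shifted_inversion Hn Hjk (ltn_trans Hkl Hl) ltac:(lia); lia.
- case=> i [j [k [l [Hij Hjk Hkl Hl [H1 H2 H3]]]]].
  have := shifted_inversion Hn Hij ltac:(lia) ltac:(lia).
  by have := shifted_inversion Hn (ltn_trans Hij Hjk) ltac:(lia) ltac:(lia); lia.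
Qed.

Definition perm_seq n (l : seq nat) := [/\ size l = n, uniq l & all (fun x => x < n) l].

Lemma perm_seq_mem n l : perm_seq n l -> forall v, (v \in l) = (v < n).
Proof.
case=> Hs Hu Ha v.
have sub : {subset l <= iota 0 n} by move=> x /(allP Ha); rewrite mem_iota.
have [_ ->] := uniq_min_size Hu sub ltac:(by rewrite size_iota Hs).
by rewrite mem_iota.
Qed.

Definition layered_seq n (l : seq nat) := perm_seq n l /\ layered n (nth 0 l).

Lemma layered_seq_cat m l t : layered_seq m l -> uniq t ->
  all (fun v => m <= v < m + size t) t ->
  (forall i, i < size t -> nth 0 t i <= (m + i).+1 /\ m + i <= (nth 0 t i).+1) ->
  layered_seq (m + size t) (l ++ t).
Proof.
move=> [[Hs Hu Ha] L] Hut Hat Lt; split; first split.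
- by rewrite size_cat Hs.
- rewrite cat_uniq Hu Hut andbT /=; apply/hasPn => v /(allP Hat) Hv.
  by apply/negP => /(allP Ha); lia.
- rewrite all_cat; apply/andP; split; apply/allP => v.
    by move/(allP Ha); lia.
  by move/(allP Hat); lia.
- move=> i Hi; rewrite nth_cat Hs; case: ltnP => Him; first exact: L.
  by have := Lt (i - m) ltac:(lia); rewrite subnKC.
Qed.

Lemma layered_seq_prefix m l t : layered_seq m (l ++ t) ->
  (forall v, size l <= v < m -> v \in t) -> layered_seq (size l) l.
Proof.
move=> [[Hs Hu Ha] L] Ht; rewrite cat_uniq in Hu; case/and3P: Hu => Hu /hasPn Hlt _.
split; first split => //.
- apply/allP => v Hv; rewrite ltnNge; apply/negP => Hge.
  have Hvm : v < m by apply: (allP Ha); rewrite mem_cat Hv.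
  by have := Hlt v (Ht v ltac:(lia)); rewrite Hv.
- by move=> i Hi; have := L i ltac:(rewrite -Hs size_cat; lia); rewrite nth_cat Hi.
Qed.

(* All layered sequences of length n: one of length n + 2 ends either with
   the fixed point n + 1 or with the transposed pair n + 1, n. *)
Fixpoint layered_seqs n : seq (seq nat) :=
  match n with
  | 0 => [:: [::]]
  | 1 => [:: [:: 0]]
  | (m.+1 as k).+1 =>
      [seq rcons l k | l <- layered_seqs k] ++ [seq l ++ [:: k; m] | l <- layered_seqs m]
  end.

Lemma layered_seqsSS n : layered_seqs n.+2 =
  [seq rcons l n.+1 | l <- layered_seqs n.+1] ++ [seq l ++ [:: n.+1; n] | l <- layered_seqs n].
Proof. by []. Qed.

Lemma size_layered_seqs n : size (layered_seqs n) = fib n.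
Proof.
elim/ltn_ind: n => n IH; case: n IH => [|[|n]] IH //.
by rewrite layered_seqsSS size_cat !size_map !IH.
Qed.

Lemma uniq_layered_seqs n : uniq (layered_seqs n).
Proof.
elim/ltn_ind: n => n IH; case: n IH => [|[|n]] IH //.
rewrite layered_seqsSS cat_uniq !map_inj_uniq ?IH //=; last exact: rcons_injl.
- rewrite andbT; apply/hasPn => _ /mapP [l1 _ ->]; apply/negP => /mapP [l2 _].
  by move/(congr1 (last 0)); rewrite last_rcons last_cat /=; lia.
- move=> a b E; have := congr1 size E; rewrite !size_cat => /addIn Hs.
  by have := congr1 (take (size a)) E; rewrite take_size_cat // take_size_cat.
Qed.

Lemma layered_seqs_sound n l : l \in layered_seqs n -> layered_seq n l.
Proof.
elim/ltn_ind: n l => n IH l; case: n IH => [|[|n]] IH.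
- by rewrite inE => /eqP ->; split => // t; rewrite ltn0.
- by rewrite inE => /eqP ->; split => // -[|t] //; rewrite ltnS ltn0.
rewrite layered_seqsSS mem_cat => /orP [] /mapP [l' Hl' ->].
- rewrite -cats1 -[n.+2]addn1; apply: layered_seq_cat => //=.
  + exact: IH Hl'.
  + lia.
  + by move=> [|i] //= _; lia.
- have -> : n.+2 = n + size [:: n.+1; n] by rewrite addn2.
  apply: layered_seq_cat => /=.
  + exact: IH Hl'.
  + by rewrite inE andbT; lia.
  + lia.
  + by move=> [|[|i]] //= _; lia.
Qed.

Lemma layered_large_value m l t v : layered_seq m (l ++ t) -> v \in l ++ t ->
  size l < v -> v \in t.
Proof.
move=> [[Hs _ _] L] Hv Hlt; rewrite mem_cat in Hv; case/orP: Hv => // Hv.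
have Hk : index v l < size l by rewrite index_mem.
have := L (index v l) ltac:(rewrite -Hs size_cat; lia).
by rewrite nth_cat Hk nth_index //; lia.
Qed.

(* A layered sequence of length n + 2 ends with n + 1, or with n + 1, n;
   removing that tail leaves a shorter layered sequence. *)
Lemma layered_seqs_complete n l : layered_seq n l -> l \in layered_seqs n.
Proof.
elim/ltn_ind: n l => n IH l Hl; case: n IH Hl => [|[|n]] IH Hl.
- by case: Hl => [[Hs _ _] _]; case: l Hs.
- case: Hl => [[Hs _ Ha] _]; case: l Hs Ha => [|x [|]] //= _.
  by rewrite andbT inE ltnS leqn0 => /eqP ->.
rewrite layered_seqsSS mem_cat; apply/orP.
case/lastP: l Hl => [|l' x] Hl; first by have [[]] := Hl.
have [[Hs Hu Ha] L] := Hl; rewrite size_rcons in Hs; case: Hs => Hs.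
have Hx : x = n \/ x = n.+1.
  have := L n.+1 (ltnSn _); rewrite nth_rcons Hs ltnn eqxx.
  by have := allP Ha x; rewrite mem_rcons inE eqxx => /(_ isT); lia.
rewrite -cats1 in Hl; clear L Hu Ha; case: Hx => Ex; subst x; last first.
  left; apply: map_f; apply: IH => //; rewrite -Hs.
  by apply: (layered_seq_prefix Hl) => v; rewrite Hs inE; lia.
right; case/lastP: l' Hs Hl => [//|l'' y]; rewrite size_rcons => -[Hs].
rewrite -cats1 -catA /= => Hl.
have Ey : y = n.+1.
  have Hin : n.+1 \in l'' ++ [:: y; n] by rewrite (perm_seq_mem Hl.1).
  by have := layered_large_value Hl Hin; rewrite Hs !inE; lia.
subst y; rewrite -cats1 -catA; apply: map_f; apply: IH => //; rewrite -Hs.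
by apply: (layered_seq_prefix Hl) => v; rewrite Hs !inE; lia.
Qed.

Definition oneline n (s : 'S_n) : seq nat := [seq val (s k) | k <- enum 'I_n].

Section OneLine.
Variables (n : nat) (s : 'S_n).
Local Notation w := (nth 0 (oneline s)).

Lemma nth_oneline (i : 'I_n) : w i = s i.
Proof. by rewrite /oneline (nth_map i) ?size_enum_ord // nth_ord_enum. Qed.

Lemma size_oneline : size (oneline s) = n.
Proof. by rewrite size_map size_enum_ord. Qed.

Lemma oneline_perm_seq : perm_seq n (oneline s).
Proof.
split; first exact: size_oneline.
- by rewrite map_inj_uniq ?enum_uniq // => a b /val_inj /perm_inj.
- by apply/allP => _ /mapP [k _ ->]; apply: ltn_ord.
Qed.
End OneLine.

Lemma oneline_inj n : injective (@oneline n).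
Proof.
move=> s1 s2 E; apply/permP => i; apply: val_inj => /=.
by rewrite -!nth_oneline E.
Qed.

Lemma oneline_onto n l : perm_seq n l -> exists s : 'S_n, oneline s = l.
Proof.
case=> Hs Hu Ha.
have Hn (i : 'I_n) : nth 0 l i < n by apply: (allP Ha); rewrite mem_nth ?Hs.
have finj : injective (fun i => Ordinal (Hn i)).
  move=> a b /(congr1 val) /= E; apply: val_inj; apply/eqP.
  by rewrite -(nth_uniq 0 _ _ Hu) ?Hs ?ltn_ord // E.
exists (perm finj); apply: (@eq_from_nth _ 0); first by rewrite size_oneline Hs.
move=> i; rewrite size_oneline => Hi.
by rewrite (nth_oneline _ (Ordinal Hi)) permE.
Qed.

Lemma perm_seq_good n l : perm_seq n l -> avoiding n (nth 0 l) -> good n (nth 0 l).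
Proof.
move=> Hl Hav; have [Hs Hu Ha] := Hl; split => //.
- by move=> i j Hi Hj /eqP; rewrite nth_uniq ?Hs // => /eqP.
- by move=> i Hi; apply: (allP Ha); rewrite mem_nth ?Hs.
- move=> v; rewrite -(perm_seq_mem Hl) => Hv.
  by exists (index v l); [rewrite -Hs index_mem | exact: nth_index].
Qed.

Lemma contains_pairsP n (s : 'S_n) q : contains_pattern s q <->
  exists f : 'I_(size q) -> 'I_n, forall a b : 'I_(size q), a < b ->
    [/\ f a < f b, (s (f a) < s (f b)) = (nth 0 q a < nth 0 q b)
      & (s (f b) < s (f a)) = (nth 0 q b < nth 0 q a)].
Proof.
split.
  case/existsP => f /forallP H; exists f => a b Hab.
  have /forallP/(_ b)/andP [/implyP H1 /eqP H2] := H a.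
  by have /forallP/(_ a)/andP [_ /eqP H3] := H b; split => //; exact: H1.
case=> f H; apply/existsP; exists (finfun f); apply/forallP => a; apply/forallP => b.
rewrite !ffunE; case: (ltngtP a b) => [Hab|Hab|/val_inj->]; last by rewrite !ltnn.
  by have [H1 H2 _] := H a b Hab; rewrite H1 H2 eqxx.
by have [_ _ H3] := H b a Hab; rewrite /= H3 eqxx.
Qed.

Definition same_order (x y u v : nat) := (x < y) = (u < v) /\ (y < x) = (v < u).

Section Bridges.
Variables (n : nat) (s : 'S_n).
Local Notation w := (nth 0 (oneline s)).

Lemma occ321P : contains_pattern s [:: 3; 2; 1] <-> occ321 n w.
Proof.
rewrite contains_pairsP; split.
- case=> f H; set o0 := @Ordinal 3 0 isT; set o1 := @Ordinal 3 1 isT.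
  set o2 := @Ordinal 3 2 isT.
  have [H01 _ E01] := H o0 o1 isT; have [H12 _ E12] := H o1 o2 isT.
  have := ltn_ord (f o2).
  by exists (f o0), (f o1), (f o2); rewrite !nth_oneline /= in E01 E12 *; (repeat split); lia.
- case=> i [j [k [Hij Hjk Hk Hkj Hji]]].
  have Hj : j < n by lia.
  have Hi : i < n by lia.
  exists (fun a => nth (Ordinal Hi) [:: Ordinal Hi; Ordinal Hj; Ordinal Hk] a).
  rewrite (nth_oneline s (Ordinal Hi)) (nth_oneline s (Ordinal Hj))
    (nth_oneline s (Ordinal Hk)) in Hkj Hji.
  by move=> [[|[|[|a]]] Ha] [[|[|[|b]]] Hb] //= _; split => //; lia.
Qed.

Lemma contains4P a b c d : contains_pattern s [:: a; b; c; d] <->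
  exists i j k l, [/\ i < j, j < k, k < l, l < n &
    [/\ same_order (w i) (w j) a b, same_order (w i) (w k) a c,
        same_order (w i) (w l) a d &
     [/\ same_order (w j) (w k) b c, same_order (w j) (w l) b d &
         same_order (w k) (w l) c d]]].
Proof.
rewrite contains_pairsP; split.
- case=> f H; set o0 := @Ordinal 4 0 isT; set o1 := @Ordinal 4 1 isT.
  set o2 := @Ordinal 4 2 isT; set o3 := @Ordinal 4 3 isT.
  have [H01 E01 F01] := H o0 o1 isT; have [H02 E02 F02] := H o0 o2 isT.
  have [H03 E03 F03] := H o0 o3 isT; have [H12 E12 F12] := H o1 o2 isT.
  have [H13 E13 F13] := H o1 o3 isT; have [H23 E23 F23] := H o2 o3 isT.
  exists (f o0), (f o1), (f o2), (f o3); rewrite /same_order !nth_oneline.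
  by split => //; exact: ltn_ord.
- case=> i [j [k [l [Hij Hjk Hkl Hl [C01 C02 C03 [C12 C13 C23]]]]]].
  have Hk : k < n by lia.
  have Hj : j < n by lia.
  have Hi : i < n by lia.
  exists (fun x => nth (Ordinal Hi) [:: Ordinal Hi; Ordinal Hj; Ordinal Hk; Ordinal Hl] x).
  move: C01 C02 C03 C12 C13 C23; rewrite /same_order (nth_oneline s (Ordinal Hi))
    (nth_oneline s (Ordinal Hj)) (nth_oneline s (Ordinal Hk)) (nth_oneline s (Ordinal Hl)).
  move=> [E01 F01] [E02 F02] [E03 F03] [E12 F12] [E13 F13] [E23 F23].
  by case=> [[|[|[|[|x]]]] Hx] [[|[|[|[|y]]]] Hy] //= _; split => //; lia.
Qed.

Lemma occ1423P : contains_pattern s [:: 1; 4; 2; 3] <-> occ1423 n w.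
Proof.
rewrite contains4P /same_order; split.
- by case=> i [j [k [l [? ? ? ? [? ? ? [? ? ?]]]]]]; exists i, j, k, l; (repeat split); lia.
- by case=> i [j [k [l [? ? ? ? [? ? ?]]]]]; exists i, j, k, l; (repeat split); lia.
Qed.

Lemma occ3124P : contains_pattern s [:: 3; 1; 2; 4] <-> occ3124 n w.
Proof.
rewrite contains4P /same_order; split.
- by case=> i [j [k [l [? ? ? ? [? ? ? [? ? ?]]]]]]; exists i, j, k, l; (repeat split); lia.
- by case=> i [j [k [l [? ? ? ? [? ? ?]]]]]; exists i, j, k, l; (repeat split); lia.
Qed.

Lemma fishburnP : fishburn s <-> ~ fishburn_violation n w.
Proof.
rewrite /fishburn -/(oneline s); split.
- move=> /negP Hf [i [j [Hij Hj Hv Hasc]]]; apply: Hf.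
  have Hi : i < n by lia.
  rewrite (nth_oneline s (Ordinal Hi)) (nth_oneline s (Ordinal Hj)) in Hv Hasc.
  apply/existsP; exists (Ordinal Hi); apply/existsP; exists (Ordinal Hj).
  by apply/and5P; split => //=; [lia|lia|apply/eqP].
- move=> Hf; apply/negP => /existsP [i /existsP [j /and5P [Hij _ _ Hasc /eqP Hv]]].
  by apply: Hf; exists i, j; rewrite !nth_oneline.
Qed.
End Bridges.

Lemma fish_avoid_spec n (s : 'S_n) :
  s \in Fish_avoid n [:: [:: 3; 2; 1]; [:: 1; 4; 2; 3]; [:: 3; 1; 2; 4]] <->
  avoiding n (nth 0 (oneline s)).
Proof.
rewrite inE /= /avoids andbT; split.
- case/and4P => /fishburnP Hf /negP H321 /negP H1423 /negP H3124.
  by split; [|rewrite -occ321P|rewrite -occ1423P|rewrite -occ3124P].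
- case=> Hf H321 H1423 H3124; apply/and4P; split; first exact/fishburnP.
  + by apply/negP; rewrite occ321P.
  + by apply/negP; rewrite occ1423P.
  + by apply/negP; rewrite occ3124P.
Qed.

Lemma card_by_encoding (T : finType) (A : {set T}) (enc : T -> seq nat) S :
  injective enc -> uniq S -> (forall x, x \in A <-> enc x \in S) ->
  (forall l, l \in S -> exists x, enc x = l) -> #|A| = size S.
Proof.
move=> inj_enc uS memA onto; rewrite cardE -(size_map enc).
apply/perm_size/uniq_perm => //; first by rewrite map_inj_uniq ?enum_uniq.
move=> l; apply/mapP/idP => [[x]|Hl]; first by rewrite mem_enum => /memA ? ->.
by have [x Ex] := onto l Hl; exists x; rewrite // mem_enum memA Ex.
Qed.

Definition candidates n := layered_seqs n ++ [:: mkseq (rotated n) n; mkseq (shifted n) n].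

Lemma perm_seq_mkseq n f : (forall i j, i < n -> j < n -> f i = f j -> i = j) ->
  (forall i, i < n -> f i < n) -> perm_seq n (mkseq f n).
Proof.
move=> Hinj Hr; split; first exact: size_mkseq.
- by rewrite map_inj_in_uniq ?iota_uniq // => a b; rewrite !mem_iota; apply: Hinj.
- by apply/allP => x /mapP [i]; rewrite mem_iota => Hi ->; apply: Hr.
Qed.

Lemma rotated_perm_seq n : 0 < n -> perm_seq n (mkseq (rotated n) n).
Proof.
by move=> Hn; apply: perm_seq_mkseq => [i j Hi Hj|i Hi]; rewrite /rotated; repeat case: eqP; lia.
Qed.

Lemma shifted_perm_seq n : 3 < n -> perm_seq n (mkseq (shifted n) n).
Proof.
by move=> Hn; apply: perm_seq_mkseq => [i j Hi Hj|i Hi]; rewrite /shifted; repeat case: eqP; lia.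
Qed.

Lemma candidates_perm_seq n l : 3 < n -> l \in candidates n -> perm_seq n l.
Proof.
move=> Hn; rewrite mem_cat !inE => /or3P [/layered_seqs_sound [] // | /eqP-> | /eqP->].
  by apply: rotated_perm_seq; lia.
exact: shifted_perm_seq.
Qed.

(* The exceptional permutations are not layered (their head exceeds 1) and
   differ from each other (heads n - 1 and 2). *)
Lemma candidates_uniq n : 3 < n -> uniq (candidates n).
Proof.
move=> Hn; have Hn0 : 0 < n by lia.
have not_layered f : 1 < f 0 -> mkseq f n \notin layered_seqs n.
  by move=> Hf; apply/negP => /layered_seqs_sound [_ L]; have := L 0 Hn0; rewrite nth_mkseq //; lia.
have Hrot := not_layered (rotated n) ltac:(rewrite /rotated /=; lia).
have Hsh := not_layered (shifted n) isT.
rewrite cat_uniq uniq_layered_seqs /= (negbTE Hrot) (negbTE Hsh) /= inE andbT.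
apply/eqP => /(congr1 (fun l => nth 0 l 0)); rewrite !nth_mkseq // /rotated /shifted /=.
lia.
Qed.

Lemma candidatesP n l : 3 < n -> perm_seq n l -> l \in candidates n <-> avoiding n (nth 0 l).
Proof.
move=> Hn Hl; have Hn0 : 0 < n by lia.
have agree f : perm_seq n (mkseq f n) -> (forall t, t < n -> nth 0 l t = f t) ->
    l = mkseq f n.
  case=> Hs _ _ E; have [Hsl _ _] := Hl.
  by apply: (@eq_from_nth _ 0) => [|t]; rewrite Hsl // => Ht; rewrite nth_mkseq ?E.
split.
- rewrite mem_cat !inE => /or3P [/layered_seqs_sound [_ L] | /eqP-> | /eqP->].
  + exact: layered_avoiding.
  + by apply: avoiding_ext (rotated_avoiding Hn) => t Ht; rewrite nth_mkseq.
  + by apply: avoiding_ext (shifted_avoiding Hn) => t Ht; rewrite nth_mkseq.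
- move=> Hav; have G := perm_seq_good Hl Hav; rewrite mem_cat !inE.
  case: (classification G Hn) => [L | Hrot | Hsh].
  + by rewrite layered_seqs_complete.
  + by rewrite (agree _ (rotated_perm_seq Hn0) Hrot) eqxx orbT.
  + by rewrite (agree _ (shifted_perm_seq Hn) Hsh) eqxx !orbT.
Qed.

Theorem mainTheorem13 (n : nat) : (4 <= n)%N ->
  #|Fish_avoid n [:: [:: 3; 2; 1]; [:: 1; 4; 2; 3]; [:: 3; 1; 2; 4]]| = fib n + 2.
Proof.
move=> Hn.
rewrite (@card_by_encoding _ _ (@oneline n) (candidates n)).
- by rewrite size_cat size_layered_seqs addn2.
- exact: oneline_inj.
- exact: candidates_uniq.
- by move=> s; rewrite fish_avoid_spec candidatesP //; exact: oneline_perm_seq.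
- by move=> l /(candidates_perm_seq Hn) /oneline_onto.
Qed.
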